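(* Assume $n$ is even. A line $\ell$ of $\mathrm{PG}(n-1,q)$ has the property that $j(\ell)$ is a line if and only if $\ell\in\mathcal D$. Equivalently, for distinct points $Fa,Fb$, the image under $j$ of the line through $Fa$ and $Fb$ is a line if and only if $F(ab^{-1})=C$.
   Context: Let $q$ be a prime power, $F=\mathbb F_q$, $n\ge 2$ an integer, and $L=\mathbb F_{q^n}\supseteq F$. Regard $L$ as an $n$-dimensional $F$-vector space; $\mathrm{PG}(n-1,q)$ denotes the projective space whose points are the one-dimensional $F$-subspaces $Fx$, $x\in L^*$, and whose lines are the two-dimensional $F$-subspaces (identified with their sets of points). Define $j:\mathrm{PG}(n-1,q)\to\mathrm{PG}(n-1,q)$ by $j(Fx)=Fx^{-1}$. When $n$ is even, $C$ denotes the unique subfield of $L$ of order $q^2$; for $x\in L^*$, $Cx$ is a two-dimensional $F$-subspace of $L$, regarded as a line of $\mathrm{PG}(n-1,q)$, and $\mathcal D=\{Cx: x\in L^*\}$ is the Desarguesian line spread. *)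

From HB Require Import structures.
From mathcomp Require Import all_boot all_order all_algebra all_field.
Set Implicit Arguments. Unset Strict Implicit. Unset Printing Implicit Defensive.
Import GRing.Theory.
Local Open Scope ring_scope.

(* L is an F-vector space (F = GF(q) finite field, L a finite extension of F
   of degree n = \dim {:L}); PG(n-1,q) is modelled by F-subspaces of L. *)
Section PG.
Variables (F : finFieldType) (L : fieldExtType F).

Definition is_point (P : {vspace L}) : bool := \dim P == 1%N.
Definition is_line (l : {vspace L}) : bool := \dim l == 2%N.

(* the map j on points: j(Fx) = F x^{-1} (independent of the chosen x) *)
Definition jmap (P : {vspace L}) : {vspace L} := <[ (vpick P)^-1 ]>%VS.

Definition j_image (l : {vspace L}) : {vspace L} -> Prop :=
  fun P => exists2 Q : {vspace L}, is_point Q && (Q <= l)%VS & P = jmap Q.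

Definition is_line_set (S : {vspace L} -> Prop) : Prop :=
  exists m : {vspace L}, is_line m /\
    forall P : {vspace L}, (is_point P && (P <= m)%VS) <-> S P.

Definition in_desarg (C : {vspace L}) (l : {vspace L}) : Prop :=
  exists x : L, x != 0 /\ l = (C * <[x]>)%VS.
End PG.

From HB Require Import structures.
From mathcomp Require Import all_boot all_order all_algebra all_field.
From mathcomp Require Import ring.
Import GRing.Theory.
Local Open Scope ring_scope.
Set Implicit Arguments. Unset Strict Implicit.

(* Let C be the subfield of order q^2 of L = GF(q^n), and write Fx for the
   point <[x]>, so that j(Fx) = F x^-1.
   - If l = C x is a spread line, then j maps its points onto the points of
     C x^-1 (C is closed under inversion), which is again a line.
   - Conversely, write l = Fa + Fb and suppose j(l) is a line m.  Then m is
     spanned by a^-1 and b^-1 and also contains (a + b)^-1, so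
     (a + b)^-1 = α a^-1 + β b^-1 with α, β in F.  Clearing denominators,
     t = a b^-1 is a root of β X^2 + (α + β - 1) X + α, a nonzero polynomial
     over F; since t is not in F, F(t) has dimension 2 over F.  In a finite
     field a subfield is determined by its dimension, hence F(t) = C, and
     then l = C b. *)

Section LinesOfAnExtension.
Variables (F : fieldType) (L : fieldExtType F).
Implicit Types (x y a b t : L) (K : {subfield L}).

Lemma vline_scale x (c : F) : c != 0 -> <[c *: x]>%VS = <[x]>%VS.
Proof.
move=> c0; apply/eqP; rewrite eqEdim !dim_vline scaler_eq0 (negPf c0) /=.
by rewrite leqnn andbT -memvE memvZ ?memv_line.
Qed.

Lemma notin_vline a b :
  a != 0 -> b != 0 -> <[a]>%VS != <[b]>%VS -> b \notin <[a]>%VS.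
Proof.
move=> a0 b0 ab; apply: contra ab => bFa.
by rewrite eq_sym eqEdim -memvE bFa !dim_vline a0 b0.
Qed.

Lemma dim_add_vlines a b :
  a != 0 -> b \notin <[a]>%VS -> \dim (<[a]> + <[b]>)%VS = 2%N.
Proof.
move=> a0 bFa; have b0 : b != 0 by apply: contraNneq bFa => ->; rewrite mem0v.
rewrite dimv_disjoint_sum ?dim_vline ?a0 ?b0 //; apply/eqP; rewrite -subv0.
apply/subvP => _ /memv_capP [/vlineP [c ->] /vlineP [d cab]].
have [d0|d0] := eqVneq d 0; first by rewrite cab d0 scale0r mem0v.
have bE : b = (d^-1 * c) *: a by rewrite -scalerA cab scalerA mulVf ?scale1r.
by rewrite bE memvZ ?memv_line in bFa.
Qed.

Lemma line_as_sum (l : {vspace L}) : \dim l = 2%N ->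
  exists a b, [/\ a != 0, b != 0, <[a]>%VS != <[b]>%VS & l = (<[a]> + <[b]>)%VS].
Proof.
move=> dl; set a := vpick l.
have a0 : a != 0 by rewrite vpick0 -dimv_eq0 dl.
have /subvPn [b bl bFa] : ~~ (l <= <[a]>)%VS.
  by apply/negP => /dimvS; rewrite dl dim_vline a0.
have b0 : b != 0 by apply: contraNneq bFa => ->; rewrite mem0v.
exists a, b; split => //; first by apply: contraNneq bFa => ->; apply: memv_line.
apply/esym/eqP; rewrite eqEdim dl dim_add_vlines // leqnn andbT.
by rewrite subv_add -!memvE memv_pick bl.
Qed.

Lemma mem_prodv_vline (U : {vspace L}) x y :
  reflect (exists2 u, u \in U & y = u * x) (y \in (U * <[x]>)%VS).
Proof.
rewrite -limg_amulr; apply: (iffP memv_imgP) => [[u Uu ->]|[u Uu ->]];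
  by exists u; rewrite ?lfunE.
Qed.

(* Multiplication by x != 0 is injective, so U * Fx has the dimension of U. *)
Lemma dim_prodv_vline (U : {vspace L}) x :
  x != 0 -> \dim (U * <[x]>) = \dim U.
Proof.
move=> x0; rewrite -limg_amulr limg_dim_eq //.
by rewrite (eqP (lker0_amulr _)) ?capv0 ?unitfE.
Qed.

Lemma ratio_notin_base a b : a != 0 -> b != 0 -> <[a]>%VS != <[b]>%VS ->
  a * b^-1 \notin (1%VS : {vspace L}).
Proof.
move=> a0 b0; apply: contra => /vlineP [c abc].
have aE : a = c *: b by rewrite -mulr_algl -abc mulfVK.
have c0 : c != 0 by apply: contraNneq a0 => c0; rewrite aE c0 scale0r.
by rewrite aE vline_scale.
Qed.

Lemma add_vlines_prodv K a b : \dim K = 2%N ->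
  a != 0 -> b != 0 -> <[a]>%VS != <[b]>%VS ->
  a * b^-1 \in K -> (<[a]> + <[b]>)%VS = (K * <[b]>)%VS.
Proof.
move=> dK a0 b0 ab abK; apply/eqP.
rewrite eqEdim dim_prodv_vline // dK dim_add_vlines ?notin_vline // leqnn andbT.
rewrite subv_add -!memvE; apply/andP; split; apply/mem_prodv_vline.
  by exists (a * b^-1); rewrite ?mulfVK.
by exists 1; rewrite ?mem1v ?mul1r.
Qed.

Lemma adjoin_degree_quadratic K t (p : {poly L}) :
  t \notin K -> p \is a polyOver K -> p != 0 -> (size p <= 3)%N -> root p t ->
  adjoin_degree K t = 2%N.
Proof.
move=> tK pK p0 sp pt; apply/anti_leq/andP; split.
  have := leq_trans (dvdp_leq p0 (minPoly_dvdp pK pt)) sp.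
  by rewrite size_minPoly ltnS.
by rewrite ltn_neqAle eq_sym adjoin_deg_eq1 tK.
Qed.

(* If (a + b)^-1 = α a^-1 + β b^-1 and t = a b^-1 is not in F, then t has
   degree 2 over F, being a root of β X^2 + (α + β - 1) X + α != 0. *)
Lemma dim_adjoin_inv_sum a b :
  a != 0 -> b != 0 -> a + b != 0 -> a * b^-1 \notin (1%VS : {vspace L}) ->
  (a + b)^-1 \in (<[a^-1]> + <[b^-1]>)%VS -> \dim <<1%VS; a * b^-1>> = 2%N.
Proof.
move=> a0 b0 ab0 t1 /memv_addP [_ /vlineP [al ->] [_ /vlineP [be ->] rel]].
pose p := Poly [:: al%:A; (al + be - 1)%:A; be%:A] : {poly L}.
have pF : p \is a polyOver (1%VS : {vspace L}).
  apply/polyOverP => i; rewrite coef_Poly.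
  by case: i => [|[|[|i]]] /=; rewrite ?nth_nil ?mem0v // memvZ ?mem1v.
have p0 : p != 0.
  apply/eqP => pz; have pcoef i : p`_i = 0 by rewrite pz coef0.
  have scal0 (c : F) : (c%:A == 0 :> L) = (c == 0).
    by rewrite scaler_eq0 oner_eq0 orbF.
  move: (pcoef 1%N) (pcoef 0%N) (pcoef 2%N); rewrite !coef_Poly /=.
  move=> /eqP + /eqP + /eqP; rewrite !scal0 => + /eqP al0 /eqP be0.
  by rewrite al0 be0 add0r sub0r oppr_eq0 oner_eq0.
have pt : root p (a * b^-1).
  apply/rootP; rewrite horner_Poly /= mul0r add0r.
  rewrite scalerBl scalerDl scale1r.
  have -> : (be%:A * (a * b^-1) + (al%:A + be%:A - 1)) * (a * b^-1) + al%:A =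
      (a * (a + b) / b) * (al%:A * a^-1 + be%:A * b^-1 - (a + b)^-1).
    by field; rewrite a0 b0 ab0.
  by rewrite !mulr_algl rel subrr mulr0.
rewrite dim_Fadjoin dimv1 muln1.
by apply: adjoin_degree_quadratic pF p0 (size_Poly _) pt.
Qed.

End LinesOfAnExtension.

Section InversionMap.
Variables (F : finFieldType) (L : fieldExtType F).
Implicit Types (x y a b : L) (P : {vspace L}) (K : {subfield L}).

(* Over a finite field, a subfield is determined by its dimension: its
   elements are the roots of X^(q^dim) - X. *)
Lemma subfield_eq_dim K1 K2 : \dim K1 = \dim K2 -> (K1 : {vspace L}) = K2.
Proof. by move=> dK; apply/vspaceP => x; rewrite !Fermat's_little_theorem dK. Qed.

Lemma is_point_vline x : x != 0 -> is_point <[x]>%VS.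
Proof. by move=> x0; rewrite /is_point dim_vline x0. Qed.

Lemma vpick_point_neq0 P : is_point P -> vpick P != 0.
Proof. by rewrite /is_point vpick0 -dimv_eq0 => /eqP ->. Qed.

Lemma point_vpick P : is_point P -> P = <[vpick P]>%VS.
Proof.
move=> Pp; apply/esym/eqP; rewrite eqEdim -memvE memv_pick /= (eqP Pp).
by rewrite dim_vline vpick_point_neq0.
Qed.

Lemma jmap_vline x : x != 0 -> jmap <[x]>%VS = <[x^-1]>%VS.
Proof.
move=> x0; have /vlineP [c xc] := memv_pick <[x]>%VS.
have c0 : c != 0.
  apply: contraNneq (vpick_point_neq0 (is_point_vline x0)) => c0.
  by rewrite xc c0 scale0r.
by rewrite /jmap xc invrZ ?unitfE // vline_scale ?invr_eq0.
Qed.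

Lemma j_image_prodv K x P : x != 0 ->
  j_image (K * <[x]>) P <-> is_point P && (P <= K * <[x^-1]>)%VS.
Proof.
have inv_mem y z : z != 0 -> y \in (K * <[z]>)%VS -> y^-1 \in (K * <[z^-1]>)%VS.
  move=> z0 /mem_prodv_vline [k kK ->]; apply/mem_prodv_vline.
  by exists k^-1; rewrite ?rpredV // invfM.
move=> x0; split.
- case=> Q /andP [Qp /subvP QKx] ->.
  have Q0 := vpick_point_neq0 Qp.
  by rewrite /jmap is_point_vline ?invr_eq0 //= -memvE inv_mem ?QKx ?memv_pick.
- case/andP => Pp /subvP PKx; have P0 := vpick_point_neq0 Pp.
  exists <[(vpick P)^-1]>%VS.
    rewrite is_point_vline ?invr_eq0 //= -memvE -[x]invrK.
    by rewrite inv_mem ?invr_eq0 ?PKx ?memv_pick.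
  by rewrite jmap_vline ?invr_eq0 // invrK -point_vpick.
Qed.

Lemma j_image_desarg K x : \dim K = 2%N -> x != 0 ->
  is_line_set (j_image (K * <[x]>)).
Proof.
move=> dK x0; exists (K * <[x^-1]>)%VS; split.
  by rewrite /is_line dim_prodv_vline ?invr_eq0 // dK.
by move=> P; rewrite j_image_prodv.
Qed.

Lemma inv_mem_j_image (l m : {vspace L}) y :
  (forall P, is_point P && (P <= m)%VS <-> j_image l P) ->
  y != 0 -> y \in l -> y^-1 \in m.
Proof.
move=> jlm y0 yl; have /jlm /andP [_] : j_image l <[y^-1]>%VS.
  by exists <[y]>%VS; rewrite ?is_point_vline -?memvE ?jmap_vline.
by rewrite -memvE.
Qed.

Lemma vline_inv_neq a b : a != 0 -> b != 0 ->
  <[a]>%VS != <[b]>%VS -> <[a^-1]>%VS != <[b^-1]>%VS.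
Proof.
move=> a0 b0; apply: contraNneq => e.
rewrite -[a]invrK -[b]invrK.
by rewrite -(jmap_vline (invr_neq0 a0)) -(jmap_vline (invr_neq0 b0)) e.
Qed.

Lemma j_image_line_adjoin (C : {subfield L}) a b : \dim C = 2%N ->
  a != 0 -> b != 0 -> <[a]>%VS != <[b]>%VS ->
  is_line_set (j_image (<[a]> + <[b]>)%VS) ->
  <<1%VS; a * b^-1>>%VS = C :> {vspace L}.
Proof.
move=> dC a0 b0 ab [m [/eqP dm jlm]].
have inv_mem := inv_mem_j_image jlm.
have t1 := ratio_notin_base a0 b0 ab.
have ab0 : a + b != 0.
  by apply: contra t1; rewrite addr_eq0 => /eqP ->; rewrite mulNr divff // rpredN mem1v.
have [aab bab] : a \in (<[a]> + <[b]>)%VS /\ b \in (<[a]> + <[b]>)%VS.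
  by split; apply: subvP (memv_line _); [apply: addvSl | apply: addvSr].
have mE : m = (<[a^-1]> + <[b^-1]>)%VS.
  apply/esym/eqP; rewrite eqEdim subv_add -!memvE !inv_mem //=.
  by rewrite dm dim_add_vlines ?invr_eq0 // notin_vline ?invr_eq0 ?vline_inv_neq.
apply: (@subfield_eq_dim <<1; a * b^-1>>%AS); rewrite dC dim_adjoin_inv_sum // -mE.
by rewrite inv_mem // memv_add ?memv_line.
Qed.

End InversionMap.
Unset Implicit Arguments. Set Strict Implicit.

Theorem mainTheorem5 (F : finFieldType) (L : fieldExtType F) (C : {subfield L}) :
  ~~ odd (\dim {:L}) -> (2 <= \dim {:L})%N -> \dim C = 2%N ->
  (forall l : {vspace L}, is_line l ->
     (is_line_set (j_image l) <-> in_desarg C l)) /\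
  (forall a b : L, a != 0 -> b != 0 -> <[a]>%VS != <[b]>%VS ->
     (is_line_set (j_image (<[a]> + <[b]>)%VS)
       <-> (<<1%VS; a * b^-1>>%VS = (C : {vspace L})))).
Proof.
(* The parity of n only ensures that C exists; here C is given. *)
move=> _ _ dC.
have sum_desarg a b : a != 0 -> b != 0 -> <[a]>%VS != <[b]>%VS ->
    <<1%VS; a * b^-1>>%VS = C -> (<[a]> + <[b]>)%VS = (C * <[b]>)%VS.
  by move=> a0 b0 ab tC; rewrite (add_vlines_prodv dC) // -tC memv_adjoin.
split.
- move=> l /eqP /line_as_sum [a [b [a0 b0 ab ->]]]; split.
    move=> /(j_image_line_adjoin dC a0 b0 ab) tC.
    by exists b; rewrite sum_desarg.
  by case=> x [x0 ->]; apply: j_image_desarg.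
- move=> a b a0 b0 ab; split; first exact: j_image_line_adjoin.
  by move=> tC; rewrite sum_desarg //; apply: j_image_desarg.
Qed.
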